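(* If $P$ is a projection algebra, then $\mathbb F(P)$ and $\mathbb M(P)$ are projection-generated DRC-semigroups, with $\mathbf P(\mathbb F(P))\cong\mathbf P(\mathbb M(P))\cong P$ as projection algebras.
   Context: Maps are written on the right and composed left to right. A projection algebra is a set $P$ with maps $\theta_p,\delta_p:P\to P$ ($p\in P$) such that for all $p,q$: $p\theta_p=p$, $p\delta_p=p$; $p\theta_{q\theta_p}=q\theta_p$, $p\delta_{q\delta_p}=q\delta_p$; $\theta_q\theta_{q\theta_p}=\theta_q\theta_p$, $\delta_q\delta_{q\delta_p}=\delta_q\delta_p$; $\theta_p\delta_p=\theta_p$, $\delta_p\theta_p=\delta_p$; $\theta_{p\delta_q}\theta_p=\theta_q\theta_p$, $\delta_{p\theta_q}\delta_p=\delta_q\delta_p$. Isomorphisms are bijections preserving all $\theta_p,\delta_p$ operations. Write $p\,\mathscr F\,q$ iff $p=q\delta_p$ and $q=p\theta_q$. A DRC-semigroup is $(S,\cdot,D,R)$, $(S,\cdot)$ a semigroup, $D,R:S\to S$ with, for all $a,b$: $D(a)a=a$, $aR(a)=a$; $D(ab)=D(aD(b))$, $R(ab)=R(R(a)b)$; $D(ab)=D(a)D(ab)D(a)$, $R(ab)=R(b)R(ab)R(b)$; $R(D(a))=D(a)$, $D(R(a))=R(a)$. $\mathbf P(S)=\{D(a):a\in S\}$ is a projection algebra under $q\theta_p=R(qp)$, $q\delta_p=D(pq)$; $S$ is projection-generated if $\mathbf P(S)$ generates $S$ as a semigroup. $\mathbb F(P)$ is the semigroup presented by generators $x_p$ ($p\in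 P$) and relations $x_p^2=x_p$, $x_px_q=x_px_{p\theta_q}$, $x_px_q=x_{q\delta_p}x_q$ ($p,q\in P$). Every element of $\mathbb F(P)$ equals $\overline{x_{p_1}\cdots x_{p_k}}$ for some $p_1\mathscr F\cdots\mathscr F p_k$, and $p_1,p_k$ are determined by the element; unary operations are $D(\overline{x_{p_1}\cdots x_{p_k}})=\overline{x_{p_1}}$, $R(\overline{x_{p_1}\cdots x_{p_k}})=\overline{x_{p_k}}$. $\mathbb M(P)$ is the subsemigroup of $\mathcal T_P\times\mathcal T_P^{\mathrm{op}}$ ($\mathcal T_P$ the full transformation semigroup on $P$, product $(\alpha,\alpha')(\beta,\beta')=(\alpha\beta,\beta'\alpha')$) generated by $\hat p=(\theta_p,\delta_p)$, $p\in P$; every element equals $\hat p_1\cdots\hat p_k$ with $p_1\mathscr F\cdots\mathscr F p_k$, with $p_1,p_k$ determined, and $D(\hat p_1\cdots\hat p_k)=\hat p_1$, $R(\hat p_1\cdots\hat p_k)=\hat p_k$. *)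

(* Maps are written on the right: [theta p q] stands for
   q theta_p and [delta p q] for q delta_p. *)
From Stdlib Require Import List ClassicalEpsilon.
Import ListNotations.
Set Implicit Arguments.

Record proj_alg (P : Type) (theta delta : P -> P -> P) : Prop := {
  pa_th_id : forall p, theta p p = p;
  pa_de_id : forall p, delta p p = p;
  pa_th2 : forall p q, theta (theta p q) p = theta p q;
  pa_de2 : forall p q, delta (delta p q) p = delta p q;
  (* theta_q theta_{q theta_p} = theta_q theta_p  (composition left to right) *)
  pa_th3 : forall p q r, theta (theta p q) (theta q r) = theta p (theta q r);
  pa_de3 : forall p q r, delta (delta p q) (delta q r) = delta p (delta q r);
  (* theta_p delta_p = theta_p ; delta_p theta_p = delta_p *)
  pa_th_de : forall p r, delta p (theta p r) = theta p r;
  pa_de_th : forall p r, theta p (delta p r) = delta p r;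
  (* theta_{p delta_q} theta_p = theta_q theta_p ; delta_{p theta_q} delta_p = delta_q delta_p *)
  pa_th5 : forall p q r, theta p (theta (delta q p) r) = theta p (theta q r);
  pa_de5 : forall p q r, delta p (delta (theta q p) r) = delta p (delta q r)
}.

Definition Frel (P : Type) (theta delta : P -> P -> P) (p q : P) : Prop :=
  p = delta p q /\ q = theta q p.

Fixpoint fchain (P : Type) (theta delta : P -> P -> P) (p : P) (w : list P) : Prop :=
  match w with
  | nil => True
  | q :: w' => Frel theta delta p q /\ fchain theta delta q w'
  end.

Record DRC_semigroup (S : Type) (mul : S -> S -> S) (D R : S -> S) : Prop := {
  drc_assoc : forall a b c, mul (mul a b) c = mul a (mul b c);
  drc_Dl : forall a, mul (D a) a = a;
  drc_Rr : forall a, mul a (R a) = a;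
  drc_D2 : forall a b, D (mul a b) = D (mul a (D b));
  drc_R2 : forall a b, R (mul a b) = R (mul (R a) b);
  drc_D3 : forall a b, D (mul a b) = mul (mul (D a) (D (mul a b))) (D a);
  drc_R3 : forall a b, R (mul a b) = mul (mul (R b) (R (mul a b))) (R b);
  drc_RD : forall a, R (D a) = D a;
  drc_DR : forall a, D (R a) = R a
}.

Inductive sgen (S : Type) (mul : S -> S -> S) (X : S -> Prop) : S -> Prop :=
  | sgen_in : forall x, X x -> sgen mul X x
  | sgen_mul : forall x y, sgen mul X x -> sgen mul X y -> sgen mul X (mul x y).

Definition projs (S : Type) (D : S -> S) (e : S) : Prop := exists a, e = D a.

Definition proj_generated (S : Type) (mul : S -> S -> S) (D : S -> S) : Prop :=
  forall a, sgen mul (projs D) a.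

(* f : P -> S is an isomorphism of projection algebras from P onto P(S),
   where P(S) carries  q theta_p = R(qp),  q delta_p = D(pq). *)
Definition PS_iso (P : Type) (theta delta : P -> P -> P)
    (S : Type) (mul : S -> S -> S) (D R : S -> S) (f : P -> S) : Prop :=
  (forall p q, f p = f q -> p = q) /\
  (forall e, projs D e <-> exists p, e = f p) /\
  (forall p q, f (theta p q) = R (mul (f q) (f p))) /\
  (forall p q, f (delta p q) = D (mul (f p) (f q))).

Section Constructions.
Context {P : Type} (theta delta : P -> P -> P).

Inductive fcong : list P -> list P -> Prop :=
  | fc_refl : forall w, fcong w w
  | fc_sym : forall u v, fcong u v -> fcong v u
  | fc_trans : forall u v w, fcong u v -> fcong v w -> fcong u w
  | fc_idem : forall u v p, fcong (u ++ [p; p] ++ v) (u ++ [p] ++ v)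
  | fc_th : forall u v p q, fcong (u ++ [p; q] ++ v) (u ++ [p; theta q p] ++ v)
  | fc_de : forall u v p q, fcong (u ++ [p; q] ++ v) (u ++ [delta p q; q] ++ v).

Record FP : Type := mkFP {
  fp_set : list P -> Prop;
  fp_ok : exists w, w <> nil /\ fp_set = fcong w
}.

Definition fp_of (w : list P) (H : w <> nil) : FP :=
  @mkFP (fcong w) (ex_intro _ w (conj H eq_refl)).

Definition fp_rep (a : FP) : list P :=
  epsilon (inhabits nil) (fun w => w <> nil /\ fp_set a = fcong w).

Lemma fp_rep_spec (a : FP) : fp_rep a <> nil /\ fp_set a = fcong (fp_rep a).
Proof. unfold fp_rep. apply epsilon_spec. exact (fp_ok a). Qed.

Lemma app_nonnil (u v : list P) : u <> nil -> u ++ v <> nil.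
Proof. destruct u; simpl; [contradiction | discriminate]. Qed.

Definition fmul (a b : FP) : FP :=
  fp_of (app_nonnil (fp_rep b) (proj1 (fp_rep_spec a))).

Definition xg (p : P) : FP :=
  @fp_of [p] (fun H : [p] = nil => @nil_cons P p nil (eq_sym H)).

Definition fprod (p : P) (w : list P) : FP :=
  fold_left (fun acc q => fmul acc (xg q)) w (xg p).

Definition FD (a : FP) : FP :=
  epsilon (inhabits a) (fun b => exists p w,
    fchain theta delta p w /\ a = fprod p w /\ b = xg p).
Definition FR (a : FP) : FP :=
  epsilon (inhabits a) (fun b => exists p w,
    fchain theta delta p w /\ a = fprod p w /\ b = xg (last w p)).

(* ---------- M(P) : subsemigroup of T_P x T_P^op generated by (theta_p, delta_p) ---------- *)
Definition tpair : Type := ((P -> P) * (P -> P))%type.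

Definition tmul (a b : tpair) : tpair :=
  (fun x => fst b (fst a x), fun x => snd a (snd b x)).

Definition hat (p : P) : tpair := (theta p, delta p).

Inductive Mgen : tpair -> Prop :=
  | Mg_hat : forall p, Mgen (hat p)
  | Mg_mul : forall a b, Mgen a -> Mgen b -> Mgen (tmul a b).

Definition MP : Type := { x : tpair | Mgen x }.

Definition mmul (a b : MP) : MP :=
  exist _ (tmul (proj1_sig a) (proj1_sig b)) (Mg_mul (proj2_sig a) (proj2_sig b)).

Definition mhat (p : P) : MP := exist _ (hat p) (Mg_hat p).

Definition mprod (p : P) (w : list P) : MP :=
  fold_left (fun acc q => mmul acc (mhat q)) w (mhat p).

Definition MD (a : MP) : MP :=
  epsilon (inhabits a) (fun b => exists p w,
    fchain theta delta p w /\ a = mprod p w /\ b = mhat p).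
Definition MR (a : MP) : MP :=
  epsilon (inhabits a) (fun b => exists p w,
    fchain theta delta p w /\ a = mprod p w /\ b = mhat (last w p)).

End Constructions.

From Stdlib Require Import List ClassicalEpsilon.
From Stdlib Require Import FunctionalExtensionality PropExtensionality ProofIrrelevance.
Import ListNotations.
Set Implicit Arguments.
Unset Strict Implicit.

(* Modulo the defining relations of F(P), every word in the generators is congruent to a word
   x_{p_1} ... x_{p_k} along an F-chain.  The projections [dword] and [rword] obtained by
   evaluating D and R letter by letter, through D(x_p a) = D(a) delta_p and
   R(a x_p) = R(a) theta_p, are invariant under the relations and equal p_1 and p_k on chains.
   Hence in any semigroup generated by letters x_p satisfying the relations, in which a chain
   product determines the ends of its chain, D(x_{p_1} ... x_{p_k}) = x_{p_1} and
   R(x_{p_1} ... x_{p_k}) = x_{p_k} are well defined, and each DRC axiom reduces to an identity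
   between these evaluations.  F(P) has this property because the evaluations are congruence
   invariants, M(P) because the ends of a chain are the largest values taken by the two
   components of its product. *)

Section ProjectionAlgebra.
Variables (P : Type) (theta delta : P -> P -> P).
Hypothesis HP : proj_alg theta delta.

Definition pa_le (a b : P) : Prop := theta b a = a.

Lemma theta_idem p x : theta p (theta p x) = theta p x.
Proof.
  rewrite <- (pa_th_de HP p x) at 1. rewrite (pa_de_th HP). apply (pa_th_de HP).
Qed.

Lemma delta_idem p x : delta p (delta p x) = delta p x.
Proof.
  rewrite <- (pa_de_th HP p x) at 1. rewrite (pa_th_de HP). apply (pa_de_th HP).
Qed.

Lemma theta_pa_le p x : pa_le (theta p x) p.
Proof. apply theta_idem. Qed.

Lemma delta_pa_le p x : pa_le (delta p x) p.
Proof. apply (pa_de_th HP). Qed.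

Lemma delta_below a b : pa_le a b -> delta b a = a.
Proof. unfold pa_le. intro H. rewrite <- H at 1. rewrite (pa_th_de HP). exact H. Qed.

Lemma theta_above q p : pa_le q p -> theta q p = q.
Proof. intro H. pose proof (pa_th2 HP p q) as E. rewrite H in E. exact E. Qed.

Lemma delta_above q p : pa_le q p -> delta q p = q.
Proof. intro H. pose proof (pa_de2 HP p q) as E. rewrite (delta_below H) in E. exact E. Qed.

Lemma pa_le_antisym a b : pa_le a b -> pa_le b a -> a = b.
Proof.
  intros Hab Hba. pose proof (pa_de2 HP a b) as E.
  rewrite (delta_below Hba), (delta_below Hab) in E. exact E.
Qed.

Lemma pa_le_max_unique (f : P -> P) p q x y :
  (forall z, pa_le (f z) p) -> f x = p -> (forall z, pa_le (f z) q) -> f y = q -> p = q.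
Proof.
  intros Hp Hx Hq Hy. apply pa_le_antisym; [rewrite <- Hx | rewrite <- Hy]; auto.
Qed.

Lemma theta_mono s a b : pa_le a b -> pa_le (theta s a) (theta s b).
Proof.
  unfold pa_le. intro H. pose proof (pa_th3 HP s b a) as E. rewrite H in E.
  rewrite <- E. apply theta_idem.
Qed.

Lemma delta_mono s a b : pa_le a b -> pa_le (delta s a) (delta s b).
Proof.
  intro H. rewrite <- (delta_below H), <- (pa_de3 HP). apply delta_pa_le.
Qed.

Lemma theta_theta_self p q : theta (theta p q) q = theta p q.
Proof. pose proof (pa_th3 HP p q q) as E. rewrite (pa_th_id HP) in E. exact E. Qed.

Lemma delta_delta_self p q : delta (delta p q) q = delta p q.
Proof. pose proof (pa_de3 HP p q q) as E. rewrite (pa_de_id HP) in E. exact E. Qed.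

Lemma delta_theta_self t s : delta t (theta s t) = delta t s.
Proof.
  pose proof (pa_de5 HP t s s) as E.
  rewrite (pa_de_id HP), (delta_above (theta_pa_le s t)) in E. exact E.
Qed.

Lemma theta_delta_self t s : theta t (delta s t) = theta t s.
Proof.
  pose proof (pa_th5 HP t s s) as E.
  rewrite (pa_th_id HP), (theta_above (delta_pa_le s t)) in E. exact E.
Qed.

Lemma delta_below_delta a b x : pa_le a b -> delta a (delta b x) = delta a x.
Proof.
  unfold pa_le. intro H. pose proof (pa_de5 HP a b x) as E. rewrite H, delta_idem in E.
  symmetry. exact E.
Qed.

End ProjectionAlgebra.

Section Words.
Variables (P : Type) (theta delta : P -> P -> P).
Hypothesis HP : proj_alg theta delta.
Local Notation fc := (fcong theta delta).
Local Notation fchain := (fchain theta delta).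

Lemma fcong_ctx a b u v : fc u v -> fc (a ++ u ++ b) (a ++ v ++ b).
Proof.
  assert (reassoc : forall x y z : list P, a ++ (x ++ y ++ z) ++ b = (a ++ x) ++ y ++ (z ++ b))
    by (intros; rewrite <- !app_assoc; reflexivity).
  induction 1; rewrite ?reassoc.
  - apply fc_refl.
  - now apply fc_sym.
  - eapply fc_trans; eassumption.
  - apply fc_idem.
  - apply fc_th.
  - apply fc_de.
Qed.

Lemma fcong_cons x u v : fc u v -> fc (x :: u) (x :: v).
Proof. intro H. pose proof (fcong_ctx [x] [] H) as E. rewrite !app_nil_r in E. exact E. Qed.

Lemma fcong_app_r u v b : fc u v -> fc (u ++ b) (v ++ b).
Proof. exact (@fcong_ctx [] b u v). Qed.

Lemma fcong_invariant (T : Type) (f : list P -> T) :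
  (forall a b u v, f u = f v -> f (a ++ u ++ b) = f (a ++ v ++ b)) ->
  (forall p, f [p; p] = f [p]) ->
  (forall p q, f [p; q] = f [p; theta q p]) ->
  (forall p q, f [p; q] = f [delta p q; q]) ->
  forall u v, fc u v -> f u = f v.
Proof. intros Hctx Hidem Hth Hde u v H. induction H; auto; congruence. Qed.

Lemma fcong_chain_below w : forall p p', fchain p w -> pa_le theta p' p ->
  exists w', fchain p' w' /\ fc (p' :: w) (p' :: w').
Proof.
  induction w as [|r w IH]; intros p p' Hc Hle.
  - exists []. split; [exact I | apply fc_refl].
  - destruct Hc as [[Hp Hr] Hc].
    set (r' := theta r p').
    destruct (IH r r' Hc (theta_pa_le HP r p')) as [w' [Hc' Hf]].
    exists (r' :: w'). split.
    + split; [split|exact Hc'].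
      * unfold r'. rewrite (delta_theta_self HP), <- (delta_below_delta HP _ Hle), <- Hp.
        symmetry. exact (delta_above HP Hle).
      * unfold r'. symmetry. apply (theta_theta_self HP).
    + eapply fc_trans; [exact (fc_th theta delta [] w p' r) | apply fcong_cons, Hf].
Qed.

Lemma fcong_chain w : forall q, exists p v, fchain p v /\ fc (q :: w) (p :: v).
Proof.
  induction w as [|r w IH]; intro q.
  - exists q, []. split; [exact I | apply fc_refl].
  - destruct (IH r) as [p [v [Hc Hf]]].
    set (q' := delta q p). set (p' := theta p q').
    destruct (fcong_chain_below Hc (theta_pa_le HP p q')) as [v' [Hc' Hf']].
    exists q', (p' :: v'). split.
    + split; [split|exact Hc'].
      * unfold p'. rewrite (delta_theta_self HP). symmetry. apply (delta_delta_self HP).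
      * unfold p'. symmetry. apply (theta_theta_self HP).
    + eapply fc_trans; [apply fcong_cons, Hf|].
      eapply fc_trans; [exact (fc_de theta delta [] v q p)|].
      eapply fc_trans; [exact (fc_th theta delta [] v q' p)|].
      apply fcong_cons, Hf'.
Qed.

(* [dact u (Some d)] is the value of D on x_u a for any a with D(a) = x_d, and
   [dact u None] that of D(x_u); dually for [ract] and R. *)
Fixpoint dact (u : list P) (o : option P) : option P :=
  match u with
  | [] => o
  | p :: u => Some (delta p (match dact u o with Some x => x | None => p end))
  end.

Definition ract (u : list P) (o : option P) : option P :=
  fold_left (fun o p => Some (theta p (match o with Some x => x | None => p end))) u o.

Fixpoint dword (p : P) (w : list P) : P :=
  match w with [] => p | q :: w => delta p (dword q w) end.

Fixpoint rword (p : P) (w : list P) : P :=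
  match w with [] => p | q :: w => rword (theta q p) w end.

Lemma dact_app u v o : dact (u ++ v) o = dact u (dact v o).
Proof. induction u as [|p u IH]; simpl; [reflexivity | now rewrite IH]. Qed.

Lemma ract_app u v o : ract (u ++ v) o = ract v (ract u o).
Proof. apply fold_left_app. Qed.

Lemma dact_fcong u v : fc u v -> dact u = dact v.
Proof.
  apply fcong_invariant; intros; apply functional_extensionality; intro o.
  - rewrite !dact_app. congruence.
  - simpl. now rewrite (delta_idem HP).
  - destruct o as [x|]; simpl.
    + now rewrite (pa_de5 HP).
    + now rewrite !(pa_de_id HP), (delta_theta_self HP).
  - simpl. now rewrite (pa_de3 HP).
Qed.

Lemma ract_fcong u v : fc u v -> ract u = ract v.
Proof.
  apply fcong_invariant; intros; apply functional_extensionality; intro o.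
  - rewrite !ract_app. congruence.
  - simpl. now rewrite (theta_idem HP).
  - simpl. now rewrite (pa_th3 HP).
  - destruct o as [x|]; simpl.
    + now rewrite (pa_th5 HP).
    + now rewrite !(pa_th_id HP), (theta_delta_self HP).
Qed.

Lemma dact_dword p w : dact (p :: w) None = Some (dword p w).
Proof.
  revert p. induction w as [|q w IH]; intro p.
  - simpl. now rewrite (pa_de_id HP).
  - change (dact (p :: q :: w) None)
      with (Some (delta p (match dact (q :: w) None with Some x => x | None => p end))).
    now rewrite IH.
Qed.

Lemma ract_rword p w : ract (p :: w) None = Some (rword p w).
Proof.
  simpl. rewrite (pa_th_id HP). generalize p. induction w as [|q w IH]; intro x.
  - reflexivity.
  - apply IH.
Qed.

Lemma dword_fcong p w q v : fc (p :: w) (q :: v) -> dword p w = dword q v.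
Proof.
  intro H. pose proof (f_equal (fun f => f None) (dact_fcong H)) as E. cbv beta in E.
  rewrite !dact_dword in E. congruence.
Qed.

Lemma rword_fcong p w q v : fc (p :: w) (q :: v) -> rword p w = rword q v.
Proof.
  intro H. pose proof (f_equal (fun f => f None) (ract_fcong H)) as E. cbv beta in E.
  rewrite !ract_rword in E. congruence.
Qed.

Lemma dword_chain p w : fchain p w -> dword p w = p.
Proof.
  revert p. induction w as [|q w IH]; intros p Hc; [reflexivity|].
  destruct Hc as [[Hp _] Hc]. simpl. rewrite (IH q Hc). symmetry. exact Hp.
Qed.

Lemma rword_chain p w : fchain p w -> rword p w = last w p.
Proof.
  enough (H : forall d, fchain p w -> rword p w = last (p :: w) d)
    by (intro Hc; rewrite (H p Hc); destruct w; reflexivity).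
  revert p. induction w as [|q w IH]; intros p d Hc; [reflexivity|].
  destruct Hc as [[_ Hq] Hc]. simpl. rewrite <- Hq. exact (IH q d Hc).
Qed.

Lemma dword_chain_rword p w : fchain p w -> dword p (w ++ [rword p w]) = p.
Proof.
  revert p. induction w as [|q w IH]; intros p Hc.
  - apply (pa_de_id HP).
  - destruct Hc as [[Hp Hq] Hc]. simpl. rewrite <- Hq, (IH q Hc). symmetry. exact Hp.
Qed.

Lemma fcong_rword_chain p w : fchain p w -> fc (p :: w ++ [rword p w]) (p :: w).
Proof.
  revert p. induction w as [|q w IH]; intros p Hc.
  - exact (fc_idem theta delta [] [] p).
  - destruct Hc as [[_ Hq] Hc]. simpl. rewrite <- Hq. apply fcong_cons, IH, Hc.
Qed.

Lemma dword_app p w q v : dword p (w ++ q :: v) = dword p (w ++ [dword q v]).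
Proof. revert p. induction w as [|r w IH]; intro p; simpl; [reflexivity | now rewrite IH]. Qed.

Lemma rword_app p w v : rword p (w ++ v) = rword (rword p w) v.
Proof. revert p. induction w as [|r w IH]; intro p; simpl; [reflexivity | apply IH]. Qed.

Lemma dword_le p w : pa_le theta (dword p w) p.
Proof. destruct w; [apply (pa_th_id HP) | apply (delta_pa_le HP)]. Qed.

Lemma dword_app_le p w u : pa_le theta (dword p (w ++ u)) (dword p w).
Proof.
  revert p. induction w as [|r w IH]; intro p; [apply dword_le|].
  simpl. apply (delta_mono HP), IH.
Qed.

Lemma rword_mono a b v : pa_le theta a b -> pa_le theta (rword a v) (rword b v).
Proof.
  revert a b. induction v as [|q v IH]; intros a b H; [exact H|].
  simpl. apply IH, (theta_mono HP), H.
Qed.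

Lemma rword_app_le x w q v : pa_le theta (rword x (w ++ q :: v)) (rword q v).
Proof. rewrite rword_app. simpl. apply rword_mono, (theta_pa_le HP). Qed.

End Words.

Section ChainSemigroup.
Variables (P : Type) (theta delta : P -> P -> P).
Hypothesis HP : proj_alg theta delta.
Local Notation fc := (fcong theta delta).
Local Notation fchain := (fchain theta delta).
Local Notation dword := (dword delta).
Local Notation rword := (rword theta).

Variables (S : Type) (mul : S -> S -> S) (gen : P -> S).
Hypothesis mul_assoc : forall a b c, mul (mul a b) c = mul a (mul b c).
Hypothesis gen_idem : forall p, mul (gen p) (gen p) = gen p.
Hypothesis gen_theta : forall p q, mul (gen p) (gen q) = mul (gen p) (gen (theta q p)).
Hypothesis gen_delta : forall p q, mul (gen p) (gen q) = mul (gen (delta p q)) (gen q).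

Definition wprod (p : P) (w : list P) : S := fold_left (fun a q => mul a (gen q)) w (gen p).

Lemma wprod_app p w q v : wprod p (w ++ q :: v) = mul (wprod p w) (wprod q v).
Proof.
  unfold wprod. rewrite fold_left_app. simpl.
  generalize (fold_left (fun a r => mul a (gen r)) w (gen p)) (gen q).
  induction v as [|r v IH]; intros x y; simpl; [reflexivity|].
  rewrite mul_assoc. apply IH.
Qed.

Definition word_eval (u : list P) : option S :=
  match u with [] => None | p :: w => Some (wprod p w) end.

Definition omul (a b : option S) : option S :=
  match a, b with
  | None, _ => b
  | _, None => a
  | Some x, Some y => Some (mul x y)
  end.

Lemma word_eval_app u v : word_eval (u ++ v) = omul (word_eval u) (word_eval v).
Proof.
  destruct u as [|p w]; [reflexivity|].
  destruct v as [|q v]; simpl.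
  - now rewrite app_nil_r.
  - now rewrite wprod_app.
Qed.

Lemma wprod_fcong p w q v : fc (p :: w) (q :: v) -> wprod p w = wprod q v.
Proof.
  intro H. enough (E : word_eval (p :: w) = word_eval (q :: v)) by (simpl in E; congruence).
  refine (fcong_invariant (f := word_eval) _ _ _ _ H).
  - intros a b u' v' E. now rewrite !word_eval_app, E.
  - intro r. simpl. f_equal. apply gen_idem.
  - intros r s. simpl. f_equal. apply gen_theta.
  - intros r s. simpl. f_equal. apply gen_delta.
Qed.

Lemma gen_sandwich d r : pa_le theta r d -> mul (mul (gen d) (gen r)) (gen d) = gen r.
Proof.
  intro H. rewrite gen_delta, (delta_below HP H), gen_idem, gen_theta, H. apply gen_idem.
Qed.

Hypothesis wprod_onto : forall a, exists p w, a = wprod p w.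
Hypothesis chain_ends_determined : forall p w q v, fchain p w -> fchain q v ->
  wprod p w = wprod q v -> p = q /\ rword p w = rword q v.

Lemma wprod_ends_determined p w q v :
  wprod p w = wprod q v -> dword p w = dword q v /\ rword p w = rword q v.
Proof.
  intro E.
  destruct (fcong_chain HP w p) as [p' [w' [Hc Hf]]].
  destruct (fcong_chain HP v q) as [q' [v' [Hc' Hf']]].
  rewrite (dword_fcong HP Hf), (dword_fcong HP Hf'), (rword_fcong HP Hf), (rword_fcong HP Hf').
  rewrite (dword_chain Hc), (dword_chain Hc').
  apply chain_ends_determined; [exact Hc | exact Hc' |].
  rewrite <- (wprod_fcong Hf), <- (wprod_fcong Hf'). exact E.
Qed.

Lemma wprod_chain_form a : exists p w, fchain p w /\ a = wprod p w.
Proof.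
  destruct (wprod_onto a) as [q [v ->]].
  destruct (fcong_chain HP v q) as [p [w [Hc Hf]]].
  exists p, w. split; [exact Hc | exact (wprod_fcong Hf)].
Qed.

Definition chain_D (a : S) : S := epsilon (inhabits a) (fun b => exists p w,
  fchain p w /\ a = wprod p w /\ b = gen p).

Definition chain_R (a : S) : S := epsilon (inhabits a) (fun b => exists p w,
  fchain p w /\ a = wprod p w /\ b = gen (last w p)).

Lemma chain_D_spec a : exists p w, fchain p w /\ a = wprod p w /\ chain_D a = gen p.
Proof.
  unfold chain_D. match goal with |- context [epsilon ?i ?Q] => apply (epsilon_spec i Q) end.
  destruct (wprod_chain_form a) as [p [w [Hc E]]]. exists (gen p), p, w. auto.
Qed.

Lemma chain_R_spec a : exists p w, fchain p w /\ a = wprod p w /\ chain_R a = gen (last w p).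
Proof.
  unfold chain_R. match goal with |- context [epsilon ?i ?Q] => apply (epsilon_spec i Q) end.
  destruct (wprod_chain_form a) as [p [w [Hc E]]]. exists (gen (last w p)), p, w. auto.
Qed.

Lemma chain_D_wprod p w : chain_D (wprod p w) = gen (dword p w).
Proof.
  destruct (chain_D_spec (wprod p w)) as [q [v [Hc [E ->]]]].
  rewrite (proj1 (wprod_ends_determined E)), (dword_chain Hc). reflexivity.
Qed.

Lemma chain_R_wprod p w : chain_R (wprod p w) = gen (rword p w).
Proof.
  destruct (chain_R_spec (wprod p w)) as [q [v [Hc [E ->]]]].
  rewrite (proj2 (wprod_ends_determined E)), (rword_chain Hc). reflexivity.
Qed.

Lemma gen_dword_wprod p w : mul (gen (dword p w)) (wprod p w) = wprod p w.
Proof.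
  destruct (fcong_chain HP w p) as [q [v [Hc Hf]]].
  rewrite (dword_fcong HP Hf), (dword_chain Hc), (wprod_fcong Hf).
  change (gen q) with (wprod q []). rewrite <- (wprod_app q [] q v).
  apply wprod_fcong, (fc_idem theta delta [] v q).
Qed.

Lemma wprod_gen_rword p w : mul (wprod p w) (gen (rword p w)) = wprod p w.
Proof.
  destruct (fcong_chain HP w p) as [q [v [Hc Hf]]].
  rewrite (rword_fcong HP Hf), (wprod_fcong Hf).
  change (gen (rword q v)) with (wprod (rword q v) []). rewrite <- wprod_app.
  apply wprod_fcong, (fcong_rword_chain Hc).
Qed.

Lemma chain_DRC : DRC_semigroup mul chain_D chain_R.
Proof.
  constructor.
  - exact mul_assoc.
  - intro a. destruct (wprod_onto a) as [p [w ->]].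
    rewrite chain_D_wprod. apply gen_dword_wprod.
  - intro a. destruct (wprod_onto a) as [p [w ->]].
    rewrite chain_R_wprod. apply wprod_gen_rword.
  - intros a b. destruct (wprod_onto a) as [p [w ->]], (wprod_onto b) as [q [v ->]].
    rewrite (chain_D_wprod q v). change (gen (dword q v)) with (wprod (dword q v) []).
    rewrite <- !wprod_app, !chain_D_wprod, dword_app. reflexivity.
  - intros a b. destruct (wprod_onto a) as [p [w ->]], (wprod_onto b) as [q [v ->]].
    rewrite (chain_R_wprod p w). change (gen (rword p w)) with (wprod (rword p w) []).
    rewrite <- !wprod_app, !chain_R_wprod, rword_app. reflexivity.
  - intros a b. destruct (wprod_onto a) as [p [w ->]], (wprod_onto b) as [q [v ->]].
    rewrite <- wprod_app, !chain_D_wprod. symmetry. apply gen_sandwich. apply (dword_app_le HP).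
  - intros a b. destruct (wprod_onto a) as [p [w ->]], (wprod_onto b) as [q [v ->]].
    rewrite <- wprod_app, !chain_R_wprod. symmetry. apply gen_sandwich. apply (rword_app_le HP).
  - intro a. destruct (wprod_onto a) as [p [w ->]]. rewrite chain_D_wprod.
    exact (chain_R_wprod (dword p w) []).
  - intro a. destruct (wprod_onto a) as [p [w ->]]. rewrite chain_R_wprod.
    exact (chain_D_wprod (rword p w) []).
Qed.

Lemma gen_is_proj q : chain_D (gen q) = gen q.
Proof. exact (chain_D_wprod q []). Qed.

Lemma chain_proj_generated : proj_generated mul chain_D.
Proof.
  intro a. destruct (wprod_onto a) as [p [w ->]].
  assert (Hgen : forall q, sgen mul (projs chain_D) (gen q)).
  { intro q. apply sgen_in. exists (gen q). symmetry. apply gen_is_proj. }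
  unfold wprod. generalize (Hgen p). generalize (gen p).
  induction w as [|q w IH]; intros x Hx; [exact Hx|].
  apply IH, sgen_mul; auto.
Qed.

Lemma chain_PS_iso : PS_iso theta delta mul chain_D chain_R gen.
Proof.
  split; [|split; [|split]].
  - intros p q E. exact (proj1 (@chain_ends_determined p [] q [] I I E)).
  - intro e. split.
    + intros [a ->]. destruct (wprod_onto a) as [p [w ->]]. rewrite chain_D_wprod. eauto.
    + intros [p ->]. exists (gen p). symmetry. apply gen_is_proj.
  - intros p q. exact (eq_sym (chain_R_wprod q [p])).
  - intros p q. exact (eq_sym (chain_D_wprod p [q])).
Qed.

End ChainSemigroup.

Section FreeInstance.
Variables (P : Type) (theta delta : P -> P -> P).
Hypothesis HP : proj_alg theta delta.
Local Notation fc := (fcong theta delta).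
Local Notation FPt := (FP theta delta).

Lemma FP_ext (a b : FPt) : fp_set a = fp_set b -> a = b.
Proof.
  destruct a as [sa ha], b as [sb hb]; simpl; intros E. subst sb.
  f_equal. apply proof_irrelevance.
Qed.

Lemma fcong_class_eq u v : fc u v -> fc u = fc v.
Proof.
  intro H. apply functional_extensionality; intro x. apply propositional_extensionality.
  split; intro H'; eapply fc_trans; eauto using fc_sym.
Qed.

Lemma fp_set_fmul (a b : FPt) u v :
  fp_set a = fc u -> fp_set b = fc v -> fp_set (fmul a b) = fc (u ++ v).
Proof.
  intros Ea Eb. simpl. apply fcong_class_eq.
  destruct (fp_rep_spec a) as [_ Ha], (fp_rep_spec b) as [_ Hb].
  rewrite Ha in Ea. rewrite Hb in Eb.
  eapply fc_trans; [apply fcong_app_r; rewrite Ea; apply fc_refl|].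
  pose proof (@fcong_ctx P theta delta u [] (fp_rep b) v) as E. rewrite !app_nil_r in E.
  apply E. rewrite Eb. apply fc_refl.
Qed.

Lemma fp_set_fprod p w : fp_set (fprod theta delta p w) = fc (p :: w).
Proof.
  unfold fprod. change (p :: w) with ([p] ++ w).
  assert (Hx : fp_set (xg theta delta p) = fc [p]) by reflexivity.
  revert Hx. generalize (xg theta delta p) [p].
  induction w as [|q w IH]; intros x u Hx.
  - now rewrite app_nil_r.
  - simpl. replace (u ++ q :: w) with ((u ++ [q]) ++ w) by (rewrite <- app_assoc; reflexivity).
    apply IH. apply fp_set_fmul; [exact Hx | reflexivity].
Qed.

Lemma fprod_eq_iff p w q v :
  fprod theta delta p w = fprod theta delta q v <-> fc (p :: w) (q :: v).
Proof.
  split; intro H.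
  - apply (f_equal (@fp_set _ theta delta)) in H. rewrite !fp_set_fprod in H.
    rewrite H. apply fc_refl.
  - apply FP_ext. rewrite !fp_set_fprod. apply fcong_class_eq, H.
Qed.

Lemma fmul_assoc (a b c : FPt) : fmul (fmul a b) c = fmul a (fmul b c).
Proof.
  destruct (fp_rep_spec a) as [_ Ha], (fp_rep_spec b) as [_ Hb], (fp_rep_spec c) as [_ Hc].
  apply FP_ext. rewrite (fp_set_fmul (fp_set_fmul Ha Hb) Hc).
  rewrite (fp_set_fmul Ha (fp_set_fmul Hb Hc)).
  now rewrite app_assoc.
Qed.

Lemma fprod_onto (a : FPt) : exists p w, a = fprod theta delta p w.
Proof.
  destruct (fp_rep_spec a) as [Hn Hs]. destruct (fp_rep a) as [|p w]; [contradiction|].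
  exists p, w. apply FP_ext. now rewrite Hs, fp_set_fprod.
Qed.

Lemma FP_chain_ends p w q v :
  fchain theta delta p w -> fchain theta delta q v ->
  fprod theta delta p w = fprod theta delta q v -> p = q /\ rword theta p w = rword theta q v.
Proof.
  intros Hc Hc' E. apply fprod_eq_iff in E.
  split; [|exact (rword_fcong HP E)].
  rewrite <- (dword_chain Hc), <- (dword_chain Hc'). exact (dword_fcong HP E).
Qed.

Lemma xg_idem p : fmul (xg theta delta p) (xg theta delta p) = xg theta delta p.
Proof. apply (fprod_eq_iff p [p] p []), (fc_idem theta delta [] [] p). Qed.

Lemma xg_theta p q :
  fmul (xg theta delta p) (xg theta delta q)
  = fmul (xg theta delta p) (xg theta delta (theta q p)).
Proof. apply (fprod_eq_iff p [q] p [theta q p]), (fc_th theta delta [] [] p q). Qed.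

Lemma xg_delta p q :
  fmul (xg theta delta p) (xg theta delta q)
  = fmul (xg theta delta (delta p q)) (xg theta delta q).
Proof. apply (fprod_eq_iff p [q] (delta p q) [q]), (fc_de theta delta [] [] p q). Qed.

Lemma FP_spec :
  DRC_semigroup (@fmul P theta delta) (@FD P theta delta) (@FR P theta delta) /\
  proj_generated (@fmul P theta delta) (@FD P theta delta) /\
  exists f : P -> FPt,
    PS_iso theta delta (@fmul P theta delta) (@FD P theta delta) (@FR P theta delta) f.
Proof.
  pose proof FP_chain_ends as ends.
  split; [|split; [|exists (xg theta delta)]].
  - exact (chain_DRC HP fmul_assoc xg_idem xg_theta xg_delta fprod_onto ends).
  - exact (chain_proj_generated HP fmul_assoc xg_idem xg_theta xg_delta fprod_onto ends).
  - exact (chain_PS_iso HP fmul_assoc xg_idem xg_theta xg_delta fprod_onto ends).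
Qed.

End FreeInstance.

Section TransformationInstance.
Variables (P : Type) (theta delta : P -> P -> P).
Hypothesis HP : proj_alg theta delta.
Local Notation MPt := (MP theta delta).
Local Notation mprod := (wprod (@mmul P theta delta) (mhat theta delta)).

Lemma MP_ext (a b : MPt) : proj1_sig a = proj1_sig b -> a = b.
Proof.
  destruct a as [x hx], b as [y hy]; simpl; intros E. subst y.
  f_equal. apply proof_irrelevance.
Qed.

Lemma mmul_assoc (a b c : MPt) : mmul (mmul a b) c = mmul a (mmul b c).
Proof. apply MP_ext. reflexivity. Qed.

Lemma mhat_idem p : mmul (mhat theta delta p) (mhat theta delta p) = mhat theta delta p.
Proof.
  apply MP_ext. simpl. unfold tmul, hat; simpl.
  f_equal; apply functional_extensionality; intro x.
  - apply (theta_idem HP).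
  - apply (delta_idem HP).
Qed.

Lemma mhat_theta p q :
  mmul (mhat theta delta p) (mhat theta delta q)
  = mmul (mhat theta delta p) (mhat theta delta (theta q p)).
Proof.
  apply MP_ext. simpl. unfold tmul, hat; simpl.
  f_equal; apply functional_extensionality; intro x; symmetry.
  - apply (pa_th3 HP).
  - apply (pa_de5 HP).
Qed.

Lemma mhat_delta p q :
  mmul (mhat theta delta p) (mhat theta delta q)
  = mmul (mhat theta delta (delta p q)) (mhat theta delta q).
Proof.
  apply MP_ext. simpl. unfold tmul, hat; simpl.
  f_equal; apply functional_extensionality; intro x; symmetry.
  - apply (pa_th5 HP).
  - apply (pa_de3 HP).
Qed.

Lemma mprod_onto (a : MPt) : exists p w, a = mprod p w.
Proof.
  destruct a as [x hx].
  enough (G : exists p w, proj1_sig (mprod p w) = x)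
    by (destruct G as [p [w G]]; exists p, w; apply MP_ext; symmetry; exact G).
  induction hx as [p|a b _ [p [w Ea]] _ [q [v Eb]]].
  - exists p, []. reflexivity.
  - exists p, (w ++ q :: v). rewrite (wprod_app _ mmul_assoc). simpl. now rewrite Ea, Eb.
Qed.

Lemma mprod_fst p w x : fst (proj1_sig (mprod p w)) x = rword theta (theta p x) w.
Proof.
  revert p x. induction w as [|q w IH]; intros p x; [reflexivity|].
  rewrite (wprod_app _ mmul_assoc p [] q w). simpl. apply IH.
Qed.

Lemma mprod_snd p w x : snd (proj1_sig (mprod p w)) x = dword delta p (w ++ [x]).
Proof.
  revert p. induction w as [|q w IH]; intro p; [reflexivity|].
  rewrite (wprod_app _ mmul_assoc p [] q w). simpl. now rewrite IH.
Qed.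

Lemma MP_chain_ends p w q v :
  fchain theta delta p w -> fchain theta delta q v ->
  mprod p w = mprod q v -> p = q /\ rword theta p w = rword theta q v.
Proof.
  intros Hc Hc' E. split.
  - apply (pa_le_max_unique HP (f := snd (proj1_sig (mprod p w)))
      (x := rword theta p w) (y := rword theta q v)).
    + intro z. rewrite mprod_snd. apply (dword_le HP).
    + rewrite mprod_snd. exact (dword_chain_rword HP Hc).
    + intro z. rewrite E, mprod_snd. apply (dword_le HP).
    + rewrite E, mprod_snd. exact (dword_chain_rword HP Hc').
  - apply (pa_le_max_unique HP (f := fst (proj1_sig (mprod p w))) (x := p) (y := q)).
    + intro z. rewrite mprod_fst. apply (rword_mono HP), (theta_pa_le HP).
    + rewrite mprod_fst, (pa_th_id HP). reflexivity.
    + intro z. rewrite E, mprod_fst. apply (rword_mono HP), (theta_pa_le HP).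
    + rewrite E, mprod_fst, (pa_th_id HP). reflexivity.
Qed.

Lemma MP_spec :
  DRC_semigroup (@mmul P theta delta) (@MD P theta delta) (@MR P theta delta) /\
  proj_generated (@mmul P theta delta) (@MD P theta delta) /\
  exists g : P -> MPt,
    PS_iso theta delta (@mmul P theta delta) (@MD P theta delta) (@MR P theta delta) g.
Proof.
  split; [|split; [|exists (mhat theta delta)]].
  - exact (chain_DRC HP mmul_assoc mhat_idem mhat_theta mhat_delta mprod_onto MP_chain_ends).
  - exact (chain_proj_generated HP mmul_assoc mhat_idem mhat_theta mhat_delta mprod_onto
      MP_chain_ends).
  - exact (chain_PS_iso HP mmul_assoc mhat_idem mhat_theta mhat_delta mprod_onto MP_chain_ends).
Qed.

End TransformationInstance.

Theorem theorem8p9 (P : Type) (theta delta : P -> P -> P)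
  (HP : proj_alg theta delta) :
  (DRC_semigroup (@fmul P theta delta) (@FD P theta delta) (@FR P theta delta) /\
   proj_generated (@fmul P theta delta) (@FD P theta delta) /\
   exists f : P -> FP theta delta,
     PS_iso theta delta (@fmul P theta delta) (@FD P theta delta) (@FR P theta delta) f) /\
  (DRC_semigroup (@mmul P theta delta) (@MD P theta delta) (@MR P theta delta) /\
   proj_generated (@mmul P theta delta) (@MD P theta delta) /\
   exists g : P -> MP theta delta,
     PS_iso theta delta (@mmul P theta delta) (@MD P theta delta) (@MR P theta delta) g).
Proof.
  split; [exact (FP_spec HP) | exact (MP_spec HP)].
Qed.
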